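(* For every $n\ge3$, choose a uniformly random pair (plane tree $T$ on $n$ vertices, unordered pair of distinct leaves of $T$). The expected distance between the two leaves is $$\frac{(2n-4)!!}{2\,(2n-5)!!}+1=\frac{\sqrt{\pi n}}{2}+1-\frac{7\sqrt\pi}{16\sqrt n}+O\Bigl(\frac1{n^{3/2}}\Bigr).$$
   Context: General (plane) trees are rooted trees in which each vertex may have any number of children, linearly ordered. A leaf is a vertex with no children. Distance means the number of edges on the connecting path. The double factorials are $(2m)!!=2\cdot4\cdots(2m)$ and $(2m-1)!!=1\cdot3\cdots(2m-1)$, with $(-1)!!=1$. *)

From Stdlib Require Import Reals Lra Arith List.
Import ListNotations.
Open Scope R_scope.

Inductive ptree : Type := Node : list ptree -> ptree.

Fixpoint tsize (t : ptree) : nat :=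
  match t with
  | Node ts => S (fold_right (fun c acc => (tsize c + acc)%nat) 0%nat ts)
  end.

(** A vertex is identified by its address: the sequence of child indices
    on the path from the root.  [leaves t] lists the addresses of the
    leaves (vertices without children), each exactly once. *)
Fixpoint leaves (t : ptree) : list (list nat) :=
  match t with
  | Node [] => [ [] ]
  | Node ts =>
      (fix go (i : nat) (l : list ptree) : list (list nat) :=
         match l with
         | [] => []
         | c :: l' => map (cons i) (leaves c) ++ go (S i) l'
         end) 0%nat ts
  end.

(** Length of the longest common prefix of two addresses
    (= depth of the lowest common ancestor). *)
Fixpoint lcp (a b : list nat) : nat :=
  match a, b with
  | x :: a', y :: b' => if Nat.eqb x y then S (lcp a' b') else 0%nat
  | _, _ => 0%nat
  end.

Definition tdist (a b : list nat) : nat :=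
  (length a + length b - 2 * lcp a b)%nat.

Fixpoint pair_dist_sum (l : list (list nat)) : nat :=
  match l with
  | [] => 0%nat
  | x :: r => (fold_right (fun y acc => tdist x y + acc) 0%nat r + pair_dist_sum r)%nat
  end.

Fixpoint pair_count {A : Type} (l : list A) : nat :=
  match l with
  | [] => 0%nat
  | _ :: r => (length r + pair_count r)%nat
  end.

Definition total_dist (L : list ptree) : nat :=
  fold_right (fun t acc => (pair_dist_sum (leaves t) + acc)%nat) 0%nat L.
Definition total_pairs (L : list ptree) : nat :=
  fold_right (fun t acc => (pair_count (leaves t) + acc)%nat) 0%nat L.

Definition expected_leaf_dist (L : list ptree) : R :=
  INR (total_dist L) / INR (total_pairs L).

Fixpoint dfact (m : nat) : nat :=
  match m with
  | 0%nat => 1%nat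
  | 1%nat => 1%nat
  | S (S k as p) => (m * dfact k)%nat
  end.

Definition closed_form (n : nat) : R :=
  INR (dfact (2 * n - 4)) / (2 * INR (dfact (2 * n - 5))) + 1.

Definition asymp_main (n : nat) : R :=
  sqrt (PI * INR n) / 2 + 1 - 7 * sqrt PI / (16 * sqrt (INR n)).

(* Removing the first subtree of the root writes every plane tree with at least two
   vertices uniquely as a graft of two smaller trees.  Summed over all trees with n
   vertices, the number of leaf pairs P and the total leaf-pair distance D, together
   with the number of trees T, of leaves L and the total leaf depth H, therefore obey
   convolution recurrences, i.e. algebraic equations between generating functions,
   starting with T = x + T^2.  Eliminating T, L and H gives (1 - 4x)^2 (D - P) = x^3
   and P (1 - 2T)^3 = x^3: so D_n = P_n + (n - 2) 4^(n - 3), and differentiation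
   yields a first-order recurrence for P_n, solved by double factorials.
   For the asymptotics, the Wallis integrals W_k = int_0^(pi/2) sin^k decrease in k;
   this squeezes ((2m)!! / (2m - 1)!!)^2 / (m + 1/4) between pi and pi + 1/m^2. *)

From Stdlib Require Import Reals List Lia Lra Arith Permutation.
Import ListNotations.
From mathcomp Require all_boot all_algebra ring lra.
From Coquelicot Require Coquelicot.
Open Scope nat_scope.

Definition sum_over {A : Type} (g : A -> nat) (l : list A) : nat :=
  fold_right (fun x acc => g x + acc) 0 l.

Lemma sum_over_app {A} (g : A -> nat) l l' :
  sum_over g (l ++ l') = sum_over g l + sum_over g l'.
Proof. induction l; simpl; lia. Qed.

Lemma sum_over_map {A B} (g : B -> nat) (h : A -> B) l :
  sum_over g (map h l) = sum_over (fun x => g (h x)) l.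
Proof. induction l; simpl; lia. Qed.

Lemma sum_over_flat_map {A B} (g : B -> nat) (h : A -> list B) l :
  sum_over g (flat_map h l) = sum_over (fun x => sum_over g (h x)) l.
Proof. induction l; simpl; rewrite ?sum_over_app; lia. Qed.

Lemma sum_over_ext_in {A} (g h : A -> nat) l :
  (forall x, In x l -> g x = h x) -> sum_over g l = sum_over h l.
Proof.
  induction l as [|x l IH]; intros E; simpl; [reflexivity|].
  rewrite E, IH; auto using in_eq, in_cons.
Qed.

Lemma sum_over_ext {A} (g h : A -> nat) l :
  (forall x, g x = h x) -> sum_over g l = sum_over h l.
Proof. intros E; apply sum_over_ext_in; auto. Qed.

Lemma sum_over_add {A} (g h : A -> nat) l :
  sum_over (fun x => g x + h x) l = sum_over g l + sum_over h l.
Proof. induction l; simpl; lia. Qed.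

Lemma sum_over_mull {A} c (g : A -> nat) l :
  sum_over (fun x => c * g x) l = c * sum_over g l.
Proof. induction l; simpl; lia. Qed.

Lemma sum_over_mulr {A} c (g : A -> nat) l :
  sum_over (fun x => g x * c) l = sum_over g l * c.
Proof. induction l; simpl; lia. Qed.

Lemma sum_over_const {A} c (l : list A) : sum_over (fun _ => c) l = c * length l.
Proof. induction l; simpl; lia. Qed.

Lemma sum_over_succ {A} (g : A -> nat) l :
  sum_over (fun x => S (g x)) l = sum_over g l + length l.
Proof. induction l; simpl; lia. Qed.

Lemma sum_over_zero {A} (g : A -> nat) l : (forall x, g x = 0) -> sum_over g l = 0.
Proof. intros E; induction l; simpl; rewrite ?E; lia. Qed.

Lemma sum_over_Permutation {A} (g : A -> nat) l l' :
  Permutation l l' -> sum_over g l = sum_over g l'.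
Proof. induction 1; simpl; lia. Qed.

Lemma pair_dist_sum_cons x X :
  pair_dist_sum (x :: X) = sum_over (tdist x) X + pair_dist_sum X.
Proof. reflexivity. Qed.

Lemma pair_dist_sum_app X Y :
  pair_dist_sum (X ++ Y) =
  pair_dist_sum X + pair_dist_sum Y + sum_over (fun x => sum_over (tdist x) Y) X.
Proof.
  induction X as [|x X IH]; [simpl; lia|].
  rewrite <- app_comm_cons, !pair_dist_sum_cons, sum_over_app, IH. simpl. lia.
Qed.

Lemma pair_dist_sum_map f X : (forall a b, tdist (f a) (f b) = tdist a b) ->
  pair_dist_sum (map f X) = pair_dist_sum X.
Proof.
  intros E; induction X as [|x X IH]; [reflexivity|].
  rewrite map_cons, !pair_dist_sum_cons, sum_over_map, IH.
  rewrite (sum_over_ext _ (tdist x)); auto.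
Qed.

Lemma pair_count_app {A} (X Y : list A) :
  pair_count (X ++ Y) = pair_count X + pair_count Y + length X * length Y.
Proof. induction X as [|x X IH]; simpl; [lia|]. rewrite length_app, IH. nia. Qed.

Lemma pair_count_map {A B} (f : A -> B) X : pair_count (map f X) = pair_count X.
Proof. induction X; simpl; rewrite ?length_map; congruence. Qed.

Fixpoint forest_leaves (i : nat) (f : list ptree) : list (list nat) :=
  match f with
  | [] => []
  | c :: f' => map (cons i) (leaves c) ++ forest_leaves (S i) f'
  end.

Definition shift_root (a : list nat) : list nat :=
  match a with [] => [] | j :: a' => S j :: a' end.

Lemma forest_leaves_succ f i : forest_leaves (S i) f = map shift_root (forest_leaves i f).
Proof.
  revert i; induction f as [|c f IH]; intros i; [reflexivity|].
  simpl. rewrite map_app, map_map, IH. reflexivity.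
Qed.

Lemma leaves_Node c f : leaves (Node (c :: f)) = forest_leaves 0 (c :: f).
Proof. reflexivity. Qed.

Definition graft (t r : ptree) : ptree := match r with Node f => Node (t :: f) end.

Lemma leaves_graft_leaf t : leaves (graft t (Node [])) = map (cons 0) (leaves t).
Proof. simpl. apply app_nil_r. Qed.

Lemma leaves_graft t c f :
  leaves (graft t (Node (c :: f))) =
  map (cons 0) (leaves t) ++ map shift_root (leaves (Node (c :: f))).
Proof.
  unfold graft. rewrite !leaves_Node, <- forest_leaves_succ. reflexivity.
Qed.

Lemma tdist_cons i a b : tdist (i :: a) (i :: b) = tdist a b.
Proof. unfold tdist. cbn [lcp length]. rewrite Nat.eqb_refl. lia. Qed.

Lemma tdist_shift_root a b : tdist (shift_root a) (shift_root b) = tdist a b.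
Proof. destruct a, b; reflexivity. Qed.

Lemma tdist_cons0_shift_root a b :
  tdist (0 :: a) (shift_root b) = S (length a) + length b.
Proof. destruct b; unfold tdist; simpl; lia. Qed.

Definition nleaves (t : ptree) : nat := length (leaves t).
Definition depth_sum (t : ptree) : nat := sum_over (@length nat) (leaves t).
Definition leaf_pairs (t : ptree) : nat := pair_count (leaves t).
Definition leaf_dist (t : ptree) : nat := pair_dist_sum (leaves t).
Definition is_leaf (t : ptree) : nat := match t with Node [] => 1 | _ => 0 end.

Lemma depth_sum_cons i X :
  sum_over (@length nat) (map (cons i) X) = sum_over (@length nat) X + length X.
Proof. rewrite sum_over_map. apply sum_over_succ. Qed.

Lemma depth_sum_shift_root X :
  sum_over (@length nat) (map shift_root X) = sum_over (@length nat) X.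
Proof. rewrite sum_over_map. apply sum_over_ext. intros []; reflexivity. Qed.

Lemma cross_dist_graft X Y :
  sum_over (fun x => sum_over (tdist x) (map shift_root Y)) (map (cons 0) X) =
  (sum_over (@length nat) X + length X) * length Y + length X * sum_over (@length nat) Y.
Proof.
  rewrite sum_over_map.
  rewrite (sum_over_ext _ (fun a => S (length a) * length Y + sum_over (@length nat) Y)).
  - rewrite sum_over_add, sum_over_mulr, sum_over_succ, sum_over_const. lia.
  - intros a. rewrite sum_over_map.
    rewrite (sum_over_ext _ (fun b => S (length a) + length b))
      by (intros; apply tdist_cons0_shift_root).
    rewrite sum_over_add, sum_over_const. lia.
Qed.

Lemma nleaves_graft t r : nleaves (graft t r) + is_leaf r = nleaves t + nleaves r.
Proof.
  unfold nleaves. destruct r as [[|c f]].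
  - rewrite leaves_graft_leaf, length_map. simpl. lia.
  - rewrite leaves_graft, length_app, !length_map. simpl. lia.
Qed.

Lemma depth_sum_graft t r : depth_sum (graft t r) = depth_sum t + nleaves t + depth_sum r.
Proof.
  unfold depth_sum, nleaves. destruct r as [[|c f]].
  - rewrite leaves_graft_leaf, depth_sum_cons. simpl. lia.
  - rewrite leaves_graft, sum_over_app, depth_sum_cons, depth_sum_shift_root. lia.
Qed.

Lemma leaf_pairs_graft t r :
  leaf_pairs (graft t r) + is_leaf r * nleaves t =
  leaf_pairs t + leaf_pairs r + nleaves t * nleaves r.
Proof.
  unfold leaf_pairs, nleaves. destruct r as [[|c f]].
  - rewrite leaves_graft_leaf, pair_count_map. simpl. lia.
  - rewrite leaves_graft, pair_count_app, !pair_count_map, !length_map. simpl. lia.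
Qed.

Lemma leaf_dist_graft t r :
  leaf_dist (graft t r) + is_leaf r * (depth_sum t + nleaves t) =
  leaf_dist t + leaf_dist r + (depth_sum t + nleaves t) * nleaves r
  + nleaves t * depth_sum r.
Proof.
  unfold leaf_dist, depth_sum, nleaves. destruct r as [[|c f]].
  - rewrite leaves_graft_leaf, pair_dist_sum_map by apply tdist_cons. simpl. lia.
  - rewrite leaves_graft, pair_dist_sum_app, cross_dist_graft,
      !pair_dist_sum_map by (apply tdist_cons || apply tdist_shift_root).
    simpl is_leaf. lia.
Qed.

(* The recursion is on [fuel], since [n - k] is not a structural subterm;
   [trees_fuel fuel n] is complete as soon as [n <= fuel]. *)
Fixpoint trees_fuel (fuel n : nat) : list ptree :=
  match fuel with
  | 0 => []
  | S fuel' =>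
      match n with
      | 0 => []
      | 1 => [Node []]
      | _ => flat_map (fun k => flat_map (fun t => map (graft t) (trees_fuel fuel' (n - k)))
                                         (trees_fuel fuel' k))
                      (seq 1 (n - 1))
      end
  end.

Definition trees (n : nat) : list ptree := trees_fuel n n.

Lemma tsize_pos t : 1 <= tsize t.
Proof. destruct t; simpl; lia. Qed.

Lemma tsize_graft t r : tsize (graft t r) = tsize t + tsize r.
Proof. destruct r; simpl. lia. Qed.

Lemma graft_inj t r t' r' : graft t r = graft t' r' -> t = t' /\ r = r'.
Proof. destruct r, r'; simpl; intros H; injection H; intros; subst; auto. Qed.

Lemma graft_surj t : 2 <= tsize t -> exists c r, t = graft c r.
Proof.
  destruct t as [[|c f]]; simpl; intros H; [lia|]. now exists c, (Node f).
Qed.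

Lemma NoDup_flat_map {A B} (g : A -> list B) l :
  NoDup l -> (forall x, In x l -> NoDup (g x)) ->
  (forall x y z, In x l -> In y l -> In z (g x) -> In z (g y) -> x = y) ->
  NoDup (flat_map g l).
Proof.
  induction l as [|a l IH]; intros Hl Hg Hd; simpl; [constructor|].
  apply NoDup_cons_iff in Hl as [Ha Hl].
  apply NoDup_app.
  - apply Hg, in_eq.
  - apply IH; auto using in_cons. intros; eapply Hd; eauto using in_cons.
  - intros z Hz Hz'. apply in_flat_map in Hz' as [y [Hy Hzy]].
    assert (a = y) by (eapply Hd; eauto using in_eq, in_cons). subst. contradiction.
Qed.

Lemma trees_fuel_succ fuel n : 2 <= n ->
  trees_fuel (S fuel) n =
  flat_map (fun k => flat_map (fun t => map (graft t) (trees_fuel fuel (n - k)))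
                              (trees_fuel fuel k))
           (seq 1 (n - 1)).
Proof. intros H; destruct n as [|[|m]]; [lia | lia | reflexivity]. Qed.

Lemma tsize_trees_fuel fuel n t : In t (trees_fuel fuel n) -> tsize t = n.
Proof.
  revert n t; induction fuel as [|fuel IH]; intros n t; [intros []|].
  destruct n as [|[|m]]; [intros [] | intros [<- | []]; reflexivity|].
  rewrite trees_fuel_succ by lia. intros Ht.
  apply in_flat_map in Ht as [k [Hk Ht]]. apply in_seq in Hk.
  apply in_flat_map in Ht as [c [Hc Ht]]. apply in_map_iff in Ht as [r [<- Hr]].
  apply IH in Hc. apply IH in Hr. rewrite tsize_graft. lia.
Qed.

Lemma trees_fuel_complete fuel n t : n <= fuel -> tsize t = n -> In t (trees_fuel fuel n).
Proof.
  revert n t; induction fuel as [|fuel IH]; intros n t Hn Ht.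
  - pose proof (tsize_pos t). lia.
  - destruct n as [|[|m]].
    + pose proof (tsize_pos t). lia.
    + destruct t as [[|c f]]; simpl in *; [auto|]. pose proof (tsize_pos c). lia.
    + rewrite trees_fuel_succ by lia. destruct (graft_surj t) as [c [r ->]]; [lia|].
      rewrite tsize_graft in Ht. pose proof (tsize_pos c). pose proof (tsize_pos r).
      apply in_flat_map. exists (tsize c). split; [apply in_seq; lia|].
      apply in_flat_map. exists c. split; [apply IH; lia|].
      apply in_map, IH; lia.
Qed.

Lemma NoDup_trees_fuel fuel n : NoDup (trees_fuel fuel n).
Proof.
  revert n; induction fuel as [|fuel IH]; intros n; [constructor|].
  destruct n as [|[|m]]; [constructor | repeat constructor; auto|].
  rewrite trees_fuel_succ by lia. apply NoDup_flat_map; [apply seq_NoDup | |].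
  - intros k _. apply NoDup_flat_map; auto.
    + intros c _. apply NoDup_map_NoDup_ForallPairs; auto.
      intros r r' _ _ E. apply (graft_inj _ _ _ _ E).
    + intros c c' z _ _ Hz Hz'.
      apply in_map_iff in Hz as [r [<- _]]. apply in_map_iff in Hz' as [r' [E _]].
      symmetry in E. apply (graft_inj _ _ _ _ E).
  - intros k k' z Hk Hk' Hz Hz'. apply in_seq in Hk. apply in_seq in Hk'.
    apply in_flat_map in Hz as [c [Hc Hz]]. apply in_map_iff in Hz as [r [<- _]].
    apply in_flat_map in Hz' as [c' [Hc' Hz']]. apply in_map_iff in Hz' as [r' [E _]].
    apply graft_inj in E as [<- _].
    apply tsize_trees_fuel in Hc. apply tsize_trees_fuel in Hc'. lia.
Qed.

Definition total (F : ptree -> nat) (n : nat) : nat := sum_over F (trees n).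

Lemma sum_over_trees_fuel F fuel n : n <= fuel -> sum_over F (trees_fuel fuel n) = total F n.
Proof.
  intros Hn. apply sum_over_Permutation, NoDup_Permutation; try apply NoDup_trees_fuel.
  intros t; split; intros Ht; apply tsize_trees_fuel in Ht; apply trees_fuel_complete; lia.
Qed.

Lemma sum_over_trees_of_size F n L :
  NoDup L -> (forall t, In t L <-> tsize t = n) -> sum_over F L = total F n.
Proof.
  intros HL HI. apply sum_over_Permutation, NoDup_Permutation; [auto | apply NoDup_trees_fuel|].
  intros t. rewrite HI. split; [apply trees_fuel_complete; lia | apply tsize_trees_fuel].
Qed.

Definition conv (a b : nat -> nat) (n : nat) : nat :=
  sum_over (fun k => a k * b (n - k)) (seq 1 (n - 1)).

Definition graft_sum (G : ptree -> ptree -> nat) (n : nat) : nat :=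
  sum_over (fun k => sum_over (fun t => sum_over (G t) (trees (n - k))) (trees k))
           (seq 1 (n - 1)).

Lemma total_graft F n : 2 <= n -> total F n = graft_sum (fun t r => F (graft t r)) n.
Proof.
  intros Hn. destruct n as [|n]; [lia|]. unfold total, trees at 1.
  rewrite trees_fuel_succ, sum_over_flat_map by lia.
  apply sum_over_ext_in. intros k Hk. apply in_seq in Hk.
  rewrite sum_over_flat_map, sum_over_trees_fuel by lia.
  apply sum_over_ext. intros t. rewrite sum_over_map, sum_over_trees_fuel by lia.
  reflexivity.
Qed.

Lemma graft_sum_add G K n :
  graft_sum (fun t r => G t r + K t r) n = graft_sum G n + graft_sum K n.
Proof.
  unfold graft_sum. rewrite <- sum_over_add. apply sum_over_ext. intros k.
  rewrite <- sum_over_add. apply sum_over_ext. intros t. apply sum_over_add.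
Qed.

Lemma graft_sum_mul a b n :
  graft_sum (fun t r => a t * b r) n = conv (total a) (total b) n.
Proof.
  unfold graft_sum, conv, total. apply sum_over_ext. intros k.
  rewrite <- sum_over_mulr. apply sum_over_ext. intros t. apply sum_over_mull.
Qed.

Lemma graft_sum_ext G K n : (forall t r, G t r = K t r) -> graft_sum G n = graft_sum K n.
Proof.
  intros E. unfold graft_sum. apply sum_over_ext. intros k.
  apply sum_over_ext. intros t. apply sum_over_ext. intros r. apply E.
Qed.

Lemma total_is_leaf n : 2 <= n -> total is_leaf n = 0.
Proof.
  intros Hn. rewrite total_graft by exact Hn. unfold graft_sum.
  apply sum_over_zero. intros k. apply sum_over_zero. intros t.
  apply sum_over_zero. intros [f]. reflexivity.
Qed.

(* Reduces a recurrence for totals over trees of size [k] to the pointwise identity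
   for [graft t r]; sizes 0 and 1 are checked by computation. *)
Ltac graft_recurrence k :=
  destruct k as [|[|k]]; [reflexivity | reflexivity|];
  rewrite ?total_is_leaf by lia; rewrite <- !graft_sum_mul, total_graft by lia;
  rewrite ?Nat.add_0_l, <- ?Nat.add_assoc, <- ?graft_sum_add;
  apply graft_sum_ext; intros t r.

Lemma total_trees_rec k :
  total (fun _ => 1) k = total is_leaf k + conv (total (fun _ => 1)) (total (fun _ => 1)) k.
Proof. graft_recurrence k. reflexivity. Qed.

Lemma total_nleaves_rec k :
  total nleaves k + conv (total (fun _ => 1)) (total is_leaf) k =
  total is_leaf k + conv (total nleaves) (total (fun _ => 1)) k
  + conv (total (fun _ => 1)) (total nleaves) k.
Proof. graft_recurrence k. pose proof (nleaves_graft t r). lia. Qed.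

Lemma total_depth_sum_rec k :
  total depth_sum k =
  conv (total depth_sum) (total (fun _ => 1)) k + conv (total nleaves) (total (fun _ => 1)) k
  + conv (total (fun _ => 1)) (total depth_sum) k.
Proof. graft_recurrence k. rewrite depth_sum_graft. lia. Qed.

Lemma total_leaf_pairs_rec k :
  total leaf_pairs k + conv (total nleaves) (total is_leaf) k =
  conv (total leaf_pairs) (total (fun _ => 1)) k + conv (total (fun _ => 1)) (total leaf_pairs) k
  + conv (total nleaves) (total nleaves) k.
Proof. graft_recurrence k. pose proof (leaf_pairs_graft t r). lia. Qed.

Lemma total_leaf_dist_rec k :
  total leaf_dist k + conv (total depth_sum) (total is_leaf) k
  + conv (total nleaves) (total is_leaf) k =
  conv (total leaf_dist) (total (fun _ => 1)) k + conv (total (fun _ => 1)) (total leaf_dist) k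
  + conv (total depth_sum) (total nleaves) k + conv (total nleaves) (total nleaves) k
  + conv (total nleaves) (total depth_sum) k.
Proof. graft_recurrence k. pose proof (leaf_dist_graft t r). lia. Qed.

Module GenFun.
Import all_boot all_algebra ring lra.
Import GRing.Theory Num.Theory.
Local Open Scope ring_scope.

Section VanishBelow.
Context {R : nzRingType}.
Implicit Types p q : {poly R}.

Definition vanish_below (N : nat) p := forall i, (i < N)%N -> p`_i = 0.

Lemma vanish_belowD N p q : vanish_below N p -> vanish_below N q -> vanish_below N (p + q).
Proof. by move=> hp hq i hi; rewrite coefD hp ?hq ?addr0. Qed.

Lemma vanish_belowN N p : vanish_below N p -> vanish_below N (- p).
Proof. by move=> hp i hi; rewrite coefN hp ?oppr0. Qed.

Lemma vanish_belowMl N p q : vanish_below N p -> vanish_below N (q * p).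
Proof.
  move=> hp i hi; rewrite coefM big1 // => j _; rewrite hp ?mulr0 //.
  exact: leq_ltn_trans (leq_subr _ _) hi.
Qed.

Lemma vanish_below_le M N p : (M <= N)%N -> vanish_below N p -> vanish_below M p.
Proof. by move=> hMN hp i hi; apply: hp; exact: leq_trans hi hMN. Qed.

Lemma vanish_below_deriv N p : vanish_below N.+1 p -> vanish_below N p^`().
Proof. by move=> hp i hi; rewrite coef_deriv hp ?mul0rn. Qed.

Lemma vanish_below_cancel N (c : R) p :
  vanish_below N ((1 - c%:P * 'X) * p) -> vanish_below N p.
Proof.
  have coef_c i : ((1 - c%:P * 'X) * p)`_i = p`_i - c * (if i is j.+1 then p`_j else 0).
    by rewrite mulrBl mul1r -mulrA coefB coefCM coefXM; case: i.
  move=> h; elim=> [|i IH] hi; first by have := h 0%N hi; rewrite coef_c mulr0 subr0.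
  by have := h i.+1 hi; rewrite coef_c IH ?mulr0 ?subr0 // ltnW.
Qed.

End VanishBelow.

Ltac vanish_below_comb :=
  repeat (apply: vanish_belowD || apply: vanish_belowN); apply: vanish_belowMl; assumption.

(* Generating functions are truncated at degree N, and identities between them are
   read modulo X^N, i.e. as [vanish_below N]. *)
Definition gf (N : nat) (a : nat -> nat) : {poly rat} := \poly_(i < N) (a i)%:R.

Lemma coef_gf N a i : (gf N a)`_i = if (i < N)%N then (a i)%:R else 0.
Proof. by rewrite coef_poly. Qed.

Lemma conv_bigop a b n : a 0%N = 0%N -> b 0%N = 0%N ->
  conv a b n = (\sum_(j < n.+1) a j * b (n - j))%N.
Proof.
  move=> a0 b0; have iotaE m k : List.seq m k = iota m k.
    by elim: k m => //= k IH m; rewrite IH.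
  have sum_overE g l : sum_over g l = (\sum_(k <- l) g k)%N.
    by elim: l => [|x l IH]; rewrite ?big_nil ?big_cons //= IH.
  rewrite /conv sum_overE iotaE.
  case: n => [|m]; first by rewrite big_ord1 a0 big_nil.
  have -> : Nat.sub m.+1 1 = m by case: m.
  rewrite big_ord_recr /= subnn b0 muln0 addn0 big_ord_recl /= a0 mul0n add0n.
  rewrite (iotaDl 1 0) big_map -(big_mkord xpredT (fun i => a i.+1 * b (m - i))%N).
  by rewrite /index_iota subn0; apply: eq_bigr => i _.
Qed.

Lemma coef_gfM N a b i : a 0%N = 0%N -> b 0%N = 0%N -> (i < N)%N ->
  (gf N a * gf N b)`_i = (conv a b i)%:R.
Proof.
  move=> a0 b0 hi; rewrite coefM conv_bigop // natr_sum; apply: eq_bigr => j _.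
  have hj : (j < N)%N by apply: leq_ltn_trans hi; rewrite -ltnS.
  have hij : (i - j < N)%N by apply: leq_ltn_trans hi; exact: leq_subr.
  by rewrite !coef_gf hj hij natrM.
Qed.

(* The coefficients of x^3 / (1 - 4x)^2. *)
Definition sq_geom (k : nat) : nat := ((k - 2) * 4 ^ (k - 3))%N.
Arguments sq_geom : simpl never.

Lemma sq_geom_rec j : (sq_geom j.+3 + 16 * sq_geom j.+1 = (j == 0%N) + 8 * sq_geom j.+2)%N.
Proof. case: j => [|[|j]] //; rewrite /sq_geom /= !subSS !subn0 !expnS; ring. Qed.

Lemma sq_geomE k : sq_geom k = Nat.mul (k - 2)%N (Nat.pow 4 (k - 3)%N).
Proof. by rewrite /sq_geom; congr muln; elim: (k - 3)%N => //= n <-; rewrite expnS. Qed.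

(* T, L, H, P, D stand for the totals of 1, nleaves, depth_sum, leaf_pairs, leaf_dist
   over the trees of each size, and S k = [k = 1] for that of is_leaf. *)
Section TreeStatistics.
Variables T S L H P D : nat -> nat.
Hypothesis hS : forall k, S k = if Nat.eqb k 1 then 1%N else 0%N.
Hypothesis hT : forall k, T k = (S k + conv T T k)%N.
Hypothesis hL : forall k, (L k + conv T S k = S k + conv L T k + conv T L k)%N.
Hypothesis hH : forall k, H k = (conv H T k + conv L T k + conv T H k)%N.
Hypothesis hP : forall k, (P k + conv L S k = conv P T k + conv T P k + conv L L k)%N.
Hypothesis hD : forall k, (D k + conv H S k + conv L S k =
  conv D T k + conv T D k + conv H L k + conv L L k + conv L H k)%N.

(* These discharge the side conditions of [coef_gfM]. *)
Let S0 : S 0%N = 0%N. Proof. exact: hS. Qed.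
Let T0 : T 0%N = 0%N. Proof. by rewrite hT S0. Qed.
Let L0 : L 0%N = 0%N. Proof. by have := hL 0; rewrite S0 /= !addn0. Qed.
Let H0 : H 0%N = 0%N. Proof. by rewrite hH. Qed.
Let P0 : P 0%N = 0%N. Proof. by have := hP 0; rewrite /= !addn0. Qed.
Let D0 : D 0%N = 0%N. Proof. by have := hD 0; rewrite /= !addn0. Qed.

Section Truncated.
Variable N : nat.
Hypothesis hN : (1 < N)%N.

Let pT := gf N T.
Let pL := gf N L.
Let pH := gf N H.
Let pP := gf N P.
Let pD := gf N D.
Let u4 : {poly rat} := 1 - 4%:R * 'X.
Let v : {poly rat} := 1 - 2%:R * pT.

Let gfS : gf N S = 'X.
Proof.
  apply/polyP => k; rewrite coef_gf coefX hS.
  by case: k => [|[|k]] /=; rewrite ?hN ?if_same.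
Qed.

Let eT := pT - 'X - pT * pT.
Let eL := pL + pT * 'X - 'X - pL * pT - pT * pL.
Let eH := pH - pH * pT - pL * pT - pT * pH.
Let eP := pP + pL * 'X - pP * pT - pT * pP - pL * pL.
Let eD := pD + pH * 'X + pL * 'X - pD * pT - pT * pD - pH * pL - pL * pL - pL * pH.

Ltac coef_eq h :=
  intros k hk; rewrite !(coefB, coefD) !coef_gfM // !coef_gf hk;
  have := h k; move/(congr1 (fun x : nat => x%:R : rat)); rewrite ?natrD; lra.

Let gfT : vanish_below N eT.
Proof. rewrite /eT -gfS. coef_eq hT. Qed.

Let gfL : vanish_below N eL.
Proof. rewrite /eL -gfS. coef_eq hL. Qed.

Let gfH : vanish_below N eH.
Proof. rewrite /eH. coef_eq hH. Qed.

Let gfP : vanish_below N eP.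
Proof. rewrite /eP -gfS. coef_eq hP. Qed.

Let gfD : vanish_below N eD.
Proof. rewrite /eD -gfS. coef_eq hD. Qed.

(* Each identity below writes its left-hand side as a combination of the residuals
   eT, ..., eD, eliminating pT, pL and pH by means of v^2 = u4 - 4 eT. *)
Let gf_dist_sub_pairs : vanish_below N (u4 * (u4 * (pD - pP)) - 'X^3).
Proof.
  have -> : u4 * (u4 * (pD - pP)) - 'X^3 =
    4%:R * (pD - pP) * (u4 + v * v) * eT + v * v * v * eD - v * v * v * eP
    + (2%:R * eL + 'X) * v * eH + 2%:R * pL * pT * v * eL + 'X * pT * eL + 'X * 'X * eT.
    by rewrite /eT /eL /eH /eP /eD /v /u4; ring.
  vanish_below_comb.
Qed.

Let gf_pairs_cube : vanish_below N (pP * v ^+ 3 - 'X^3).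
Proof.
  have -> : pP * v ^+ 3 - 'X^3 =
    v * v * eP + (eL + 'X * pT) * eL + 'X * (1 - pT) * eL + 'X * 'X * eT.
    by rewrite /eT /eL /eP /v; ring.
  vanish_below_comb.
Qed.

(* Differentiating pP v^3 = X^3 and eT = 0, and using v^2 = u4, gives the
   first-order equation X u4 pP' = (3 - 6X) pP. *)
Let gf_pairs_ode :
  vanish_below N.-1 (u4 * ('X * u4 * pP^`() - (3%:R - 6%:R * 'X) * pP)).
Proof.
  have eN : N = N.-1.+1 by rewrite prednK // ltnW.
  have zA := gf_pairs_cube; set A := pP * v ^+ 3 - 'X^3 in zA.
  have zA' : vanish_below N.-1 A^`() by apply: vanish_below_deriv; rewrite -eN.
  have zT' : vanish_below N.-1 eT^`() by apply: vanish_below_deriv; rewrite -eN.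
  have zA1 : vanish_below N.-1 A by apply: vanish_below_le zA; exact: leq_pred.
  have zT1 : vanish_below N.-1 eT by apply: vanish_below_le gfT; exact: leq_pred.
  have dA : A^`() = pP^`() * v ^+ 3 - 6%:R * pP * v * v * pT^`() - 3%:R * 'X * 'X.
    by rewrite /A /v !derivE; ring.
  have dT : eT^`() = pT^`() - 1 - 2%:R * pT * pT^`() by rewrite /eT !derivE; ring.
  rewrite dA in zA'; rewrite dT in zT'.
  pose B := v * v - u4.
  have -> : u4 * ('X * u4 * pP^`() - (3%:R - 6%:R * 'X) * pP) =
    'X * v * (pP^`() * v ^+ 3 - 6%:R * pP * v * v * pT^`() - 3%:R * 'X * 'X)
    + 4%:R * 'X * pP^`() * (2%:R * u4 + B) * eT - 24%:R * 'X * pP * eT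
    + 6%:R * 'X * pP * (u4 + B) * (pT^`() - 1 - 2%:R * pT * pT^`())
    - 12%:R * pP * (2%:R * u4 + B) * eT - 3%:R * v * A.
    by rewrite /B /A /u4 /v /eT; ring.
  vanish_below_comb.
Qed.

Let cancel_u4 {M : nat} {p : {poly rat}} : vanish_below M (u4 * p) -> vanish_below M p.
Proof. by rewrite /u4 -polyC_natr; exact: vanish_below_cancel. Qed.

Let gf_sq_geom : vanish_below N (u4 * (u4 * gf N sq_geom) - 'X^3).
Proof.
  move=> k hk; set q := gf N sq_geom.
  have -> : u4 * (u4 * q) - 'X^3 = q - ('X * q) *+ 8 + ('X^2 * q) *+ 16 - 'X^3
    by rewrite /u4; ring.
  rewrite coefB coefD coefB !coefMn coefXM coefXnM coefXn !coef_gf.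
  case: k hk => [|[|[|j]]] hk; rewrite /= ?subSS ?subn0 hk ?(ltnW hk) ?(ltnW (ltnW hk)).
  1-3: by rewrite /sq_geom /= ?mul0rn ?subr0 ?addr0.
  have := congr1 (fun x : nat => x%:R : rat) (sq_geom_rec j).
  by rewrite 2!natrD (natrM _ 16) (natrM _ 8) !eqSS !mulr_natl => h; lra.
Qed.

Lemma leaf_dist_sub_pairs_trunc k : (k < N)%N ->
  (D k)%:R = (P k)%:R + (sq_geom k)%:R :> rat.
Proof.
  move=> hk; set q := gf N sq_geom.
  have hq : vanish_below N (u4 * (u4 * (pD - pP - q))).
    have -> : u4 * (u4 * (pD - pP - q)) =
      (u4 * (u4 * (pD - pP)) - 'X^3) - (u4 * (u4 * q) - 'X^3) by ring.
    by apply: vanish_belowD; [apply: gf_dist_sub_pairs | apply/vanish_belowN/gf_sq_geom].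
  have := cancel_u4 (cancel_u4 hq) k hk.
  by rewrite !coefB !coef_gf hk => h; lra.
Qed.

Lemma leaf_pairs_rec_trunc i : (i.+4 < N.-1)%N ->
  i.+1%:R * (P i.+4)%:R = (4 * i + 6)%:R * (P i.+3)%:R :> rat.
Proof.
  move=> hi; have := cancel_u4 gf_pairs_ode _ hi.
  have -> : 'X * u4 * pP^`() - (3%:R - 6%:R * 'X) * pP =
    'X * pP^`() - ('X * ('X * pP^`())) *+ 4 - pP *+ 3 + ('X * pP) *+ 6 by rewrite /u4; ring.
  have hi' : (i.+4 < N)%N by apply: leq_trans hi (leq_pred _).
  rewrite coefD !coefB !coefMn !coefXM /= !coef_deriv !coef_gf hi' (ltnW hi') /=.
  move=> h; apply/eqP; rewrite -subr_eq0; apply/eqP.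
  by rewrite -h; ring.
Qed.

End Truncated.

Lemma leaf_dist_sub_pairs k : D k = (P k + sq_geom k)%N.
Proof.
  apply/eqP; rewrite -(eqr_nat rat) natrD; apply/eqP.
  exact: (@leaf_dist_sub_pairs_trunc k.+2).
Qed.

Lemma leaf_pairs_rec i : (i.+1 * P i.+4 = (4 * i + 6) * P i.+3)%N.
Proof.
  apply/eqP; rewrite -(eqr_nat rat) !natrM; apply/eqP.
  exact: (@leaf_pairs_rec_trunc i.+4.+2).
Qed.

End TreeStatistics.
End GenFun.

Lemma total_is_leaf_delta k : total is_leaf k = if Nat.eqb k 1 then 1 else 0.
Proof. destruct k as [|[|k]]; [reflexivity | reflexivity | apply total_is_leaf; lia]. Qed.

Lemma total_leaf_dist_eq n :
  total leaf_dist n = total leaf_pairs n + (n - 2) * 4 ^ (n - 3).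
Proof.
  rewrite <- GenFun.sq_geomE.
  exact (GenFun.leaf_dist_sub_pairs _ _ _ _ _ _ total_is_leaf_delta total_trees_rec
           total_nleaves_rec total_depth_sum_rec total_leaf_pairs_rec total_leaf_dist_rec n).
Qed.

Lemma total_leaf_pairs_succ i :
  S i * total leaf_pairs (S (S (S (S i)))) = (4 * i + 6) * total leaf_pairs (S (S (S i))).
Proof.
  exact (GenFun.leaf_pairs_rec _ _ _ _ total_is_leaf_delta total_trees_rec
           total_nleaves_rec total_leaf_pairs_rec i).
Qed.

Lemma dfact_SS m : dfact (S (S m)) = S (S m) * dfact m.
Proof. reflexivity. Qed.

Lemma dfact_pos m : 1 <= dfact m.
Proof.
  enough (H : 1 <= dfact m /\ 1 <= dfact (S m)) by apply H.
  induction m as [|m [IH IH']]; [simpl; lia|]. rewrite dfact_SS. nia.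
Qed.

Lemma dfact_odd m : dfact (2 * m + 1) = (2 * m + 1) * dfact (2 * m - 1).
Proof.
  destruct m as [|m]; [reflexivity|].
  replace (2 * S m + 1) with (S (S (2 * m + 1))) by lia.
  replace (2 * S m - 1) with (2 * m + 1) by lia. reflexivity.
Qed.

Lemma total_leaf_pairs_dfact j :
  total leaf_pairs (j + 3) * dfact (2 * j + 2) = 2 * (j + 1) * 4 ^ j * dfact (2 * j + 1).
Proof.
  induction j as [|j IH]; [reflexivity|].
  replace (S j + 3) with (S (S (S (S j)))) by lia.
  replace (j + 3) with (S (S (S j))) in IH by lia.
  replace (2 * S j + 2) with (S (S (2 * j + 2))) by lia.
  replace (2 * S j + 1) with (S (S (2 * j + 1))) by lia.
  rewrite !dfact_SS, Nat.pow_succ_r'.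
  apply (Nat.mul_cancel_l _ _ (S j)); [lia|].
  transitivity (S (S (2 * j + 2)) * (S j * total leaf_pairs (S (S (S (S j)))))
                * dfact (2 * j + 2)); [ring|].
  rewrite total_leaf_pairs_succ.
  transitivity (S (S (2 * j + 2)) * (4 * j + 6)
                * (total leaf_pairs (S (S (S j))) * dfact (2 * j + 2))); [ring|].
  rewrite IH. ring.
Qed.

Lemma total_leaf_pairs_closed n : 3 <= n ->
  total leaf_pairs n * dfact (2 * n - 4) = 2 * ((n - 2) * 4 ^ (n - 3)) * dfact (2 * n - 5).
Proof.
  intros Hn. pose proof (total_leaf_pairs_dfact (n - 3)) as HP.
  replace (n - 3 + 3) with n in HP by lia.
  replace (2 * (n - 3) + 2) with (2 * n - 4) in HP by lia.
  replace (2 * (n - 3) + 1) with (2 * n - 5) in HP by lia.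
  replace (n - 3 + 1) with (n - 2) in HP by lia.
  rewrite HP. ring.
Qed.

Lemma INR_add_div_of_mul_eq p e a b : p * b = 2 * e * a -> a <> 0 -> p <> 0 ->
  (INR (p + e) / INR p = INR b / (2 * INR a) + 1)%R.
Proof.
  intros E Ha Hp. apply (f_equal INR) in E. rewrite !mult_INR in E.
  replace (INR 2) with 2%R in E by reflexivity.
  apply not_0_INR in Ha. apply not_0_INR in Hp.
  rewrite plus_INR.
  replace (INR b) with (2 * INR e * INR a / INR p)%R by (rewrite <- E; field; auto).
  field. auto.
Qed.

Lemma expected_leaf_dist_closed_form n L : 3 <= n -> NoDup L ->
  (forall t, In t L <-> tsize t = n) -> expected_leaf_dist L = closed_form n.
Proof.
  intros Hn HL HI. unfold expected_leaf_dist, closed_form.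
  change (total_dist L) with (sum_over leaf_dist L).
  change (total_pairs L) with (sum_over leaf_pairs L).
  rewrite !(sum_over_trees_of_size _ n L HL HI), total_leaf_dist_eq.
  pose proof (total_leaf_pairs_closed n Hn) as HP.
  pose proof (dfact_pos (2 * n - 4)). pose proof (dfact_pos (2 * n - 5)).
  pose proof (Nat.pow_nonzero 4 (n - 3)).
  apply INR_add_div_of_mul_eq; [exact HP | lia |].
  intros E. rewrite E in HP. nia.
Qed.

Open Scope R_scope.

Lemma INR_double m : INR (2 * m) = 2 * INR m.
Proof. rewrite mult_INR. reflexivity. Qed.

Lemma le_div_of_mul_le a b d : 0 < d -> a * d <= b -> a <= b / d.
Proof.
  intros Hd H. apply (Rmult_le_reg_r d); [exact Hd|].
  replace (b / d * d) with b by (field; lra). exact H.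
Qed.

Lemma div_le_of_le_mul a b d : 0 < d -> a <= b * d -> a / d <= b.
Proof.
  intros Hd H. apply (Rmult_le_reg_r d); [exact Hd|].
  replace (a / d * d) with a by (field; lra). exact H.
Qed.

Lemma le_of_le_add_div (x y c : R) (m : nat) :
  (forall M, (m <= M)%nat -> (1 <= M)%nat -> x <= y + c / INR M) -> x <= y.
Proof.
  intros H. apply Rle_plus_epsilon. intros eps Heps.
  destruct (INR_archimed eps c Heps) as [M0 HM0].
  set (M := Nat.max (Nat.max m 1) M0).
  assert (HM : INR M0 <= INR M) by (apply le_INR; lia).
  assert (HM1 : 0 < INR M) by (apply lt_0_INR; lia).
  specialize (H M ltac:(lia) ltac:(lia)).
  assert (c / INR M <= eps); [|lra].
  apply (Rmult_le_reg_r (INR M)); [exact HM1|].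
  replace (c / INR M * INR M) with c by (field; lra). nra.
Qed.

Lemma Rabs_sub_le_of_sq a b c e : 0 <= a -> 0 < c -> c <= b ->
  Rabs (a ^ 2 - b ^ 2) <= e -> Rabs (a - b) <= e / c.
Proof.
  intros Ha Hc Hcb H.
  replace (a - b) with ((a ^ 2 - b ^ 2) / (a + b)) by (field; lra).
  unfold Rdiv. rewrite Rabs_mult, Rabs_inv, (Rabs_right (a + b)) by lra.
  pose proof (Rabs_pos (a ^ 2 - b ^ 2)).
  apply Rle_trans with (e * / (a + b)).
  - apply Rmult_le_compat_r; [left; apply Rinv_0_lt_compat|]; lra.
  - apply Rmult_le_compat_l; [lra | apply Rinv_le_contravar; lra].
Qed.

Module Wallis.
Import Coquelicot.

Definition wallis (k : nat) : R := RInt (fun x => sin x ^ k) 0 (PI / 2).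

Lemma continuous_sin_pow k x : continuous (fun x => sin x ^ k) x.
Proof.
  apply (ex_derive_continuous (K := R_AbsRing) (V := R_NormedModule)).
  eexists. apply is_derive_pow, is_derive_sin.
Qed.

Lemma ex_RInt_sin_pow k : ex_RInt (fun x => sin x ^ k) 0 (PI / 2).
Proof.
  apply (ex_RInt_continuous (V := R_CompleteNormedModule)). intros; apply continuous_sin_pow.
Qed.

(* Integration by parts, with [- cos x * sin x ^ (k + 1)] as the antiderivative of
   [(k + 2) sin^(k+2) - (k + 1) sin^k]. *)
Lemma wallis_rec k : INR (k + 2) * wallis (k + 2) = INR (k + 1) * wallis k.
Proof.
  set (F := fun x => - cos x * sin x ^ S k).
  set (df := fun x => INR (k + 2) * sin x ^ (k + 2) - INR (k + 1) * sin x ^ k).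
  assert (HD : forall x, is_derive F x (df x)).
  { intros x. unfold F, df. auto_derive; [exact I|].
    replace (k + 2)%nat with (S (S k)) by lia. replace (k + 1)%nat with (S k) by lia.
    change (match k with 0%nat => 1 | S _ => INR k + 1 end) with (INR (S k)).
    rewrite !S_INR. simpl pow.
    assert (E : cos x * cos x = 1 - sin x * sin x)
      by (pose proof (sin2_cos2 x) as E; unfold Rsqr in E; lra).
    transitivity (sin x * sin x * sin x ^ k - (INR k + 1) * sin x ^ k * (cos x * cos x));
      [ring | rewrite E; ring]. }
  assert (HI : is_RInt df 0 (PI / 2) (minus (F (PI / 2)) (F 0))).
  { apply (is_RInt_derive (V := R_CompleteNormedModule)); [intros; apply HD|].
    intros x _. unfold df. apply (ex_derive_continuous (K := R_AbsRing) (V := R_NormedModule)).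
    auto_derive; auto. }
  unfold F in HI. rewrite cos_PI2, cos_0, sin_0 in HI. simpl pow in HI.
  apply (is_RInt_unique (V := R_CompleteNormedModule)) in HI. unfold df in HI.
  rewrite (RInt_minus (fun x => INR (k + 2) * sin x ^ (k + 2))
                      (fun x => INR (k + 1) * sin x ^ k)) in HI
    by apply (ex_RInt_scal (fun x => sin x ^ _)), ex_RInt_sin_pow.
  rewrite (RInt_scal (fun x => sin x ^ (k + 2))), (RInt_scal (fun x => sin x ^ k)) in HI
    by apply ex_RInt_sin_pow.
  unfold wallis. unfold minus, plus, opp, scal in HI; simpl in HI. unfold mult in HI; simpl in HI.
  lra.
Qed.

Lemma wallis_0 : wallis 0 = PI / 2.
Proof.
  unfold wallis. simpl pow. rewrite RInt_const.
  unfold scal; simpl. unfold mult; simpl. ring.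
Qed.

Lemma wallis_1 : wallis 1 = 1.
Proof.
  unfold wallis.
  rewrite (is_RInt_unique (V := R_CompleteNormedModule) _ _ _ (minus (- cos (PI / 2)) (- cos 0))).
  - rewrite cos_PI2, cos_0. unfold minus, plus, opp; simpl. ring.
  - apply (is_RInt_derive (V := R_CompleteNormedModule) (fun x => - cos x)).
    + intros x _. auto_derive; [exact I | ring].
    + intros x _. apply continuous_sin_pow.
Qed.

Lemma wallis_succ_le k : wallis (S k) <= wallis k.
Proof.
  pose proof PI_RGT_0.
  apply RInt_le; [lra | apply ex_RInt_sin_pow | apply ex_RInt_sin_pow|].
  intros x Hx. simpl pow.
  assert (0 <= sin x) by (apply sin_ge_0; lra).
  assert (sin x <= 1) by apply SIN_bound.
  assert (0 <= sin x ^ k) by (apply pow_le; auto).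
  nra.
Qed.

Definition dfact_ratio (m : nat) : R := INR (dfact (2 * m)) / INR (dfact (2 * m - 1)).

Lemma dfact_INR_pos m : 0 < INR (dfact m).
Proof. apply lt_0_INR, dfact_pos. Qed.

Lemma dfact_ratio_pos m : 0 < dfact_ratio m.
Proof. apply Rdiv_lt_0_compat; apply dfact_INR_pos. Qed.

Lemma dfact_ratio_succ m :
  dfact_ratio (S m) = dfact_ratio m * (2 * INR m + 2) / (2 * INR m + 1).
Proof.
  unfold dfact_ratio.
  replace (2 * S m)%nat with (S (S (2 * m))) by lia.
  replace (S (S (2 * m)) - 1)%nat with (2 * m + 1)%nat by lia.
  rewrite dfact_odd, dfact_SS, !mult_INR, plus_INR, INR_1, !S_INR, INR_double.
  pose proof (dfact_INR_pos (2 * m)). pose proof (dfact_INR_pos (2 * m - 1)).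
  pose proof (pos_INR m). field. lra.
Qed.

Lemma dfact_ratio_0 : dfact_ratio 0 = 1.
Proof. unfold dfact_ratio. simpl. field. Qed.

Lemma wallis_step k : wallis (k + 2) = (INR k + 1) / (INR k + 2) * wallis k.
Proof.
  pose proof (wallis_rec k) as R. pose proof (pos_INR k).
  rewrite !plus_INR, INR_1 in R. replace (INR 2) with 2 in R by reflexivity.
  apply (Rmult_eq_reg_l (INR k + 2)); [rewrite R; field|]; lra.
Qed.

Lemma wallis_even m : wallis (2 * m) = PI / (2 * dfact_ratio m).
Proof.
  induction m as [|m IH].
  - rewrite Nat.mul_0_r, wallis_0, dfact_ratio_0. field.
  - replace (2 * S m)%nat with (2 * m + 2)%nat by lia.
    rewrite wallis_step, IH, dfact_ratio_succ, INR_double.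
    pose proof (pos_INR m). pose proof (dfact_ratio_pos m). field. lra.
Qed.

Lemma wallis_odd m : wallis (2 * m + 1) = dfact_ratio m / (2 * INR m + 1).
Proof.
  induction m as [|m IH].
  - change (2 * 0 + 1)%nat with 1%nat. rewrite wallis_1, dfact_ratio_0, INR_0. lra.
  - replace (2 * S m + 1)%nat with (2 * m + 1 + 2)%nat by lia.
    rewrite wallis_step, IH, dfact_ratio_succ, S_INR, plus_INR, INR_double, INR_1.
    pose proof (pos_INR m). pose proof (dfact_ratio_pos m). field. lra.
Qed.

(* [wallis (2k+3) <= wallis (2k+2) <= wallis (2k+1)], each term expressed by
   [dfact_ratio (S k)]. *)
Lemma dfact_ratio_sq_bounds k :
  PI * (INR k + 1) <= dfact_ratio (S k) ^ 2 <= PI * (INR k + 3 / 2).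
Proof.
  pose proof (wallis_succ_le (2 * k + 1)) as M1. pose proof (wallis_succ_le (2 * k + 2)) as M2.
  replace (S (2 * k + 1)) with (2 * S k)%nat in M1 by lia.
  replace (2 * k + 2)%nat with (2 * S k)%nat in M2 by lia.
  replace (S (2 * S k)) with (2 * S k + 1)%nat in M2 by lia.
  rewrite wallis_even, wallis_odd in M1. rewrite wallis_even, wallis_odd in M2.
  pose proof (pos_INR k). pose proof (dfact_ratio_pos (S k)).
  set (r := dfact_ratio (S k)) in *.
  replace (dfact_ratio k / (2 * INR k + 1)) with (r / (2 * INR k + 2)) in M1
    by (unfold r; rewrite dfact_ratio_succ; pose proof (dfact_ratio_pos k); field; lra).
  rewrite S_INR in M2.
  apply (Rmult_le_compat_r (2 * r * (2 * INR k + 2))) in M1; [|nra].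
  apply (Rmult_le_compat_r (2 * r * (2 * INR k + 3))) in M2; [|nra].
  replace (PI / (2 * r) * (2 * r * (2 * INR k + 2))) with (2 * PI * (INR k + 1)) in M1
    by (field; lra).
  replace (r / (2 * INR k + 2) * (2 * r * (2 * INR k + 2))) with (2 * r ^ 2) in M1
    by (field; lra).
  replace (r / (2 * (INR k + 1) + 1) * (2 * r * (2 * INR k + 3))) with (2 * r ^ 2) in M2
    by (field; lra).
  replace (PI / (2 * r) * (2 * r * (2 * INR k + 3))) with (2 * PI * (INR k + 3 / 2)) in M2
    by (field; lra).
  lra.
Qed.

Definition pi_approx (m : nat) : R := dfact_ratio m ^ 2 / (INR m + / 4).

Lemma pi_approx_pos m : 0 < pi_approx m.
Proof.
  unfold pi_approx. pose proof (dfact_ratio_pos m). pose proof (pos_INR m).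
  apply Rdiv_lt_0_compat; [apply pow_lt|]; lra.
Qed.

Lemma pi_approx_sub_succ m :
  pi_approx m - pi_approx (S m) = pi_approx (S m) / (4 * (INR m + 1) ^ 2 * (4 * INR m + 1)).
Proof.
  unfold pi_approx. rewrite dfact_ratio_succ, S_INR.
  pose proof (dfact_ratio_pos m). pose proof (pos_INR m).
  field. repeat split; try lra; apply Rgt_not_eq, pow_lt; lra.
Qed.

Lemma pi_approx_succ_le m : pi_approx (S m) <= pi_approx m.
Proof.
  pose proof (pi_approx_sub_succ m). pose proof (pi_approx_pos (S m)). pose proof (pos_INR m).
  assert (0 <= pi_approx (S m) / (4 * (INR m + 1) ^ 2 * (4 * INR m + 1))); [|lra].
  apply Rdiv_le_0_compat; [lra|]. apply Rmult_lt_0_compat; [|lra].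
  apply Rmult_lt_0_compat; [lra | apply pow_lt; lra].
Qed.

Lemma pi_approx_le m : (1 <= m)%nat -> pi_approx m <= 16 / 5.
Proof.
  induction 1 as [|m Hm IH].
  - unfold pi_approx, dfact_ratio. simpl. lra.
  - pose proof (pi_approx_succ_le m). lra.
Qed.

Lemma pi_approx_sub_succ_le m : (1 <= m)%nat ->
  pi_approx m - pi_approx (S m) <= 1 / INR m ^ 2 - 1 / (INR m + 1) ^ 2.
Proof.
  intros Hm. rewrite pi_approx_sub_succ.
  assert (Hx : 1 <= INR m) by (apply (le_INR 1); exact Hm).
  pose proof (pi_approx_le (S m) ltac:(lia)). pose proof (pi_approx_pos (S m)).
  set (x := INR m) in *. set (y := pi_approx (S m)) in *.
  apply div_le_of_le_mul; [apply Rmult_lt_0_compat; [apply Rmult_lt_0_compat|]; nra|].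
  replace ((1 / x ^ 2 - 1 / (x + 1) ^ 2) * (4 * (x + 1) ^ 2 * (4 * x + 1)))
    with (4 * (2 * x + 1) * (4 * x + 1) / x ^ 2) by (field; lra).
  apply le_div_of_mul_le; nra.
Qed.

Lemma pi_approx_antitone m M : (m <= M)%nat -> pi_approx M <= pi_approx m.
Proof. induction 1 as [|M _ IH]; [lra|]. pose proof (pi_approx_succ_le M). lra. Qed.

Lemma pi_approx_sub_inv_sq_monotone m M : (1 <= m)%nat -> (m <= M)%nat ->
  pi_approx m - 1 / INR m ^ 2 <= pi_approx M - 1 / INR M ^ 2.
Proof.
  intros Hm. induction 1 as [|M HM IH]; [lra|].
  pose proof (pi_approx_sub_succ_le M ltac:(lia)). rewrite S_INR. lra.
Qed.

Lemma pi_approx_near M : (1 <= M)%nat ->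
  PI - PI / INR M <= pi_approx M <= PI + PI / INR M.
Proof.
  intros HM. destruct M as [|k]; [lia|].
  destruct (dfact_ratio_sq_bounds k) as [Hlo Hhi].
  unfold pi_approx. rewrite S_INR. pose proof (pos_INR k). pose proof PI_RGT_0.
  assert (0 <= PI / (4 * (INR k + 1))) by (apply Rdiv_le_0_compat; lra).
  split; [apply le_div_of_mul_le | apply div_le_of_le_mul]; try lra.
  - replace ((PI - PI / (INR k + 1)) * (INR k + 1 + / 4))
      with (PI * (INR k + 1) - 3 * PI / 4 - PI / (4 * (INR k + 1))) by (field; lra).
    lra.
  - replace ((PI + PI / (INR k + 1)) * (INR k + 1 + / 4))
      with (PI * (INR k + 3 / 2) + 3 * PI / 4 + PI / (4 * (INR k + 1))) by (field; lra).
    lra.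
Qed.

Lemma pi_approx_bounds m : (1 <= m)%nat -> PI <= pi_approx m <= PI + 1 / INR m ^ 2.
Proof.
  intros Hm. split.
  - apply (le_of_le_add_div _ _ PI m). intros M HmM HM.
    pose proof (pi_approx_antitone m M HmM). pose proof (pi_approx_near M HM). lra.
  - assert (pi_approx m - 1 / INR m ^ 2 <= PI); [|lra].
    apply (le_of_le_add_div _ _ PI m). intros M HmM HM.
    pose proof (pi_approx_sub_inv_sq_monotone m M Hm HmM). pose proof (pi_approx_near M HM).
    assert (0 <= 1 / INR M ^ 2) by (apply Rdiv_le_0_compat; [lra | apply pow_lt, lt_0_INR; lia]).
    lra.
Qed.

Lemma dfact_ratio_sq_error n : (4 <= n)%nat ->
  Rabs (dfact_ratio (n - 2) ^ 2 - PI * (INR n - 7 / 4 + 49 / (64 * INR n))) <= 4 / INR n.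
Proof.
  intros Hn. pose proof PI_RGT_0. pose proof PI_4.
  assert (Hx : 4 <= INR n) by (replace 4 with (INR 4) by (simpl; ring); apply le_INR; exact Hn).
  destruct (pi_approx_bounds (n - 2) ltac:(lia)) as [Hlo Hhi].
  rewrite minus_INR in Hhi by lia. replace (INR 2) with 2 in Hhi by reflexivity.
  replace (dfact_ratio (n - 2) ^ 2) with (pi_approx (n - 2) * (INR n - 7 / 4)).
  2: { unfold pi_approx. rewrite minus_INR by lia. replace (INR 2) with 2 by reflexivity.
       field. lra. }
  set (x := INR n) in *. set (p := pi_approx (n - 2)) in *.
  assert (Herr : (p - PI) * (x - 7 / 4) <= 4 / x).
  { apply Rle_trans with (1 / (x - 2) ^ 2 * (x - 7 / 4)).
    - apply Rmult_le_compat_r; lra.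
    - replace (1 / (x - 2) ^ 2 * (x - 7 / 4)) with ((x - 7 / 4) / (x - 2) ^ 2) by (field; lra).
      apply div_le_of_le_mul; [apply pow_lt; lra|].
      apply (Rmult_le_reg_r x); [lra|].
      replace (4 / x * (x - 2) ^ 2 * x) with (4 * (x - 2) ^ 2) by (field; lra). nra. }
  assert (Hpi : PI * (49 / (64 * x)) <= 4 / x).
  { apply le_div_of_mul_le; [lra|].
    replace (PI * (49 / (64 * x)) * x) with (49 * PI / 64) by (field; lra). lra. }
  assert (0 <= PI * (49 / (64 * x))) by (apply Rmult_le_pos; [lra | apply Rdiv_le_0_compat; lra]).
  assert (0 <= (p - PI) * (x - 7 / 4)) by (apply Rmult_le_pos; lra).
  apply Rabs_le.
  replace (p * (x - 7 / 4) - PI * (x - 7 / 4 + 49 / (64 * x)))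
    with ((p - PI) * (x - 7 / 4) - PI * (49 / (64 * x))) by ring.
  lra.
Qed.

Lemma closed_form_dfact_ratio n : (3 <= n)%nat -> closed_form n = dfact_ratio (n - 2) / 2 + 1.
Proof.
  intros Hn. unfold closed_form, dfact_ratio.
  replace (2 * n - 4)%nat with (2 * (n - 2))%nat by lia.
  replace (2 * n - 5)%nat with (2 * (n - 2) - 1)%nat by lia.
  pose proof (dfact_INR_pos (2 * (n - 2) - 1)). field. lra.
Qed.

Lemma closed_form_asymptotics n : (4 <= n)%nat ->
  Rabs (closed_form n - asymp_main n) <= 4 / (INR n * sqrt (INR n)).
Proof.
  intros Hn. pose proof PI_RGT_0. pose proof PI2_3_2.
  assert (Hx : 4 <= INR n) by (replace 4 with (INR 4) by (simpl; ring); apply le_INR; exact Hn).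
  pose proof (dfact_ratio_sq_error n Hn) as Herr.
  rewrite closed_form_dfact_ratio by lia. unfold asymp_main.
  rewrite sqrt_mult by lra.
  set (x := INR n) in *. set (s := sqrt x). set (a := dfact_ratio (n - 2)).
  assert (Hs2 : s * s = x) by (apply sqrt_sqrt; lra).
  assert (Hs : 2 <= s).
  { replace 2 with (sqrt (2 * 2)) by (apply sqrt_square; lra). apply sqrt_le_1_alt; lra. }
  assert (Hp2 : sqrt PI * sqrt PI = PI) by (apply sqrt_sqrt; lra).
  assert (Hp : 1 <= sqrt PI) by (rewrite <- sqrt_1; apply sqrt_le_1_alt; lra).
  set (b := sqrt PI * (s - 7 / (8 * s))).
  assert (Hb : s / 2 <= b).
  { assert (7 / (8 * s) <= s / 2) by (apply div_le_of_le_mul; nra). unfold b. nra. }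
  assert (Hb2 : b ^ 2 = PI * (x - 7 / 4 + 49 / (64 * x))).
  { unfold b. rewrite <- Hs2.
    transitivity (sqrt PI * sqrt PI * (s - 7 / (8 * s)) ^ 2); [ring | rewrite Hp2; field; lra]. }
  replace (a / 2 + 1 - (sqrt PI * s / 2 + 1 - 7 * sqrt PI / (16 * s))) with ((a - b) / 2)
    by (unfold b; field; lra).
  rewrite <- Hb2 in Herr.
  pose proof (Rabs_sub_le_of_sq a b (s / 2) (4 / x)
                (Rlt_le _ _ (dfact_ratio_pos _)) ltac:(lra) Hb Herr) as Hab.
  rewrite Rabs_div, (Rabs_right 2) by lra.
  apply div_le_of_le_mul; [lra|].
  replace (4 / (x * s) * 2) with (4 / x / (s / 2)) by (field; lra). exact Hab.
Qed.

End Wallis.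

Theorem corollary3p5 :
  (forall (n : nat) (L : list ptree),
      (3 <= n)%nat ->
      NoDup L ->
      (forall t : ptree, In t L <-> tsize t = n) ->
      expected_leaf_dist L = closed_form n)
  /\
  (exists (C : R) (N : nat), forall n : nat, (N <= n)%nat ->
      Rabs (closed_form n - asymp_main n) <= C / (INR n * sqrt (INR n))).
Proof.
  split.
  - exact expected_leaf_dist_closed_form.
  - exists 4, 4%nat. exact Wallis.closed_form_asymptotics.
Qed.
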